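(* Let $\mathcal{B}$ be a binary number format and $\mathbb{F}^E_m$ a floating-point format with $|\mathbb{F}^E_m\cap[0,1]|\le|\overline{\mathbb{R}}_{\mathcal{B}}|+1$, where $\overline{\mathbb{R}}_{\mathcal{B}}$ is the set of values of $\mathcal{B}$. Let $\mathcal{F}$ be the set of CDFs with atoms in $\overline{\mathbb{R}}_{\mathcal{B}}$ and cumulative probabilities in $\mathbb{F}^E_m$, i.e. probability distributions on the finite totally ordered set $\overline{\mathbb{R}}_{\mathcal{B}}$ whose cumulative probabilities $\Pr(\{y:y\le x\})$, $x\in\overline{\mathbb{R}}_{\mathcal{B}}$, all lie in $\mathbb{F}^E_m$. Then $\max_{F'\in\mathcal{F}}H(F')=m+2-2^{-2^{E-1}+3}$, where $H$ denotes Shannon entropy (in bits).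
   Context: $\overline{\mathbb{R}}=\mathbb{R}\cup\{-\infty,+\infty,\bot\}$ with the strict linear order $-\infty<$ reals $<+\infty<\bot$. A binary number format $\mathcal{B}=(n,\gamma_{\mathcal{B}},\phi_{\mathcal{B}})$ consists of $n\ge1$, a map $\gamma_{\mathcal{B}}:\{0,1\}^n\to\overline{\mathbb{R}}$, and a bijection $\phi_{\mathcal{B}}$ of $\{0,1\}^n$ with $b<_{\mathrm{dict}}b'\Rightarrow\gamma_{\mathcal{B}}(\phi_{\mathcal{B}}(b))\le\gamma_{\mathcal{B}}(\phi_{\mathcal{B}}(b'))$; its set of values is $\overline{\mathbb{R}}_{\mathcal{B}}=\gamma_{\mathcal{B}}(\{0,1\}^n)$. $\mathbb{F}^E_m$ is the IEEE-754-style set of floating-point numbers with $E$ exponent bits and $m$ mantissa bits (bias $2^{E-1}-1$, with subnormals), regarded as a set of reals; $\mathbb{F}^E_m\cap[0,1]$ counts zero once. *)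

From HB Require Import structures.
From mathcomp Require Import all_boot all_order all_algebra.
From mathcomp Require Import all_classical all_reals exp.
Set Implicit Arguments. Unset Strict Implicit. Unset Printing Implicit Defensive.
Import Order.TTheory GRing.Theory Num.Theory.
Local Open Scope ring_scope.

Section Defs.
Variable R : realType.

(* Extended reals  R ∪ {-oo, +oo, ⊥}  with  -oo < reals < +oo < ⊥. *)
Inductive Rb := RbNinf | RbFin of R | RbPinf | RbBot.

Definition Rb_enc (x : Rb) : R + nat :=
  match x with RbNinf => inr 0%N | RbFin r => inl r | RbPinf => inr 1%N | RbBot => inr 2%N end.
Definition Rb_dec (y : R + nat) : option Rb :=
  match y with
  | inl r => Some (RbFin r)
  | inr 0%N => Some RbNinf | inr 1%N => Some RbPinf | inr 2%N => Some RbBot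
  | _ => None end.
Lemma Rb_encK : pcancel Rb_enc Rb_dec. Proof. by case. Qed.
HB.instance Definition _ := Equality.copy Rb (pcan_type Rb_encK).

Definition Rb_le (x y : Rb) : bool :=
  match x, y with
  | RbNinf, _ => true
  | RbFin r, RbFin s => r <= s
  | RbFin _, RbPinf | RbFin _, RbBot => true
  | RbPinf, RbPinf | RbPinf, RbBot => true
  | RbBot, RbBot => true
  | _, _ => false
  end.

Definition bits (n : nat) := {ffun 'I_n -> bool}.

(* strict dictionary (lexicographic, first bit most significant) order *)
Definition dict_lt n (b b' : bits n) : Prop :=
  exists i : 'I_n, (forall j : 'I_n, (j < i)%N -> b j = b' j) /\ b i = false /\ b' i = true.

Definition is_binfmt n (gamma : bits n -> Rb) (phi : bits n -> bits n) : Prop :=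
  (1 <= n)%N /\ bijective phi /\
  (forall b b', dict_lt b b' -> Rb_le (gamma (phi b)) (gamma (phi b'))).

Definition fmt_vals n (gamma : bits n -> Rb) : seq Rb :=
  undup [seq gamma b | b <- enum {: bits n}].

(* IEEE-754-style floats F^E_m (finite values only), bias 2^(E-1)-1, with
   subnormals; exponent field e ranges over 0 .. 2^E - 2 (all-ones reserved). *)
Definition fbias (E : nat) : int := (2 ^ E.-1)%:Z - 1.
Definition fval (E m : nat) (s : bool) (e k : nat) : R :=
  (-1) ^+ s *
  (if e == 0%N then k%:R * 2 ^ (1 - fbias E - m%:Z)
   else (2 ^ m + k)%:R * 2 ^ (e%:Z - fbias E - m%:Z)).
Definition float_vals (E m : nat) : seq R :=
  undup [seq fval E m t.1.1 (nat_of_ord t.1.2) (nat_of_ord t.2)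
        | t : bool * 'I_(2 ^ E - 1) * 'I_(2 ^ m) <- enum {: bool * 'I_(2 ^ E - 1) * 'I_(2 ^ m)}].
(* |F^E_m ∩ [0,1]| (zero counted once) *)
Definition card_F01 (E m : nat) : nat :=
  size [seq x <- float_vals E m | (0 <= x) && (x <= 1)].

(* probability distributions on the value set, given by their mass functions *)
Definition cdf n (gamma : bits n -> Rb) (p : Rb -> R) (x : Rb) : R :=
  \sum_(y <- fmt_vals gamma | Rb_le y x) p y.
Definition is_Fdist n (gamma : bits n -> Rb) (E m : nat) (p : Rb -> R) : Prop :=
  (forall x, 0 <= p x) /\ (forall x, x \notin fmt_vals gamma -> p x = 0) /\
  \sum_(x <- fmt_vals gamma) p x = 1 /\
  (forall x, x \in fmt_vals gamma -> cdf gamma p x \in float_vals E m).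

Definition log2 (x : R) : R := ln x / ln 2.
Definition entropy n (gamma : bits n -> Rb) (p : Rb -> R) : R :=
  - \sum_(x <- fmt_vals gamma) (if p x == 0 then 0 else p x * log2 (p x)).

End Defs.

(* Multiplying by top = 2^(m + c), c = 2^(E-1) - 2, turns the floats of
   [0, 1] into the naturals X <= top that are multiples of their spacing
   ulp X = 2^(max 0 (log2 X - m)).  A cdf with float values cuts [0, top) into
   intervals between consecutive grid points; a mass D / top contributes
   -p log2 p = sum over its D unit cells t of (m + c - log2 D) / top, and
   ulp t <= D for each such cell.  So the entropy is at most the budget
   sum_(t < top) (m + c - log2 (ulp t)) / top, with equality when the cdf
   visits every grid point in turn, one atom per point of (0, top], and the
   cardinality hypothesis provides that many values.  Summing the ulp exponents
   binade by binade evaluates the budget to m + 2 - 2^(1 - c). *)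

From HB Require Import structures.
From mathcomp Require Import all_boot all_order all_algebra.
From mathcomp Require Import all_classical all_reals exp.
From mathcomp Require Import zify ring lra.
Import Order.TTheory GRing.Theory Num.Theory.

Set Implicit Arguments. Unset Strict Implicit. Unset Printing Implicit Defensive.

Lemma dvdn_gap d a b : d %| a -> d %| b -> a < b -> a + d <= b.
Proof.
move=> da db lt_ab; have := dvdn_leq _ (dvdn_sub db da).
by rewrite subn_gt0 lt_ab => /(_ isT); lia.
Qed.

Section Grid.
Variables m c : nat.

Definition top := 2 ^ (m + c).
Definition ulp_exp t := trunc_log 2 t - m.
Definition ulp t := 2 ^ ulp_exp t.
Definition on_grid X := (X <= top) && (ulp X %| X).
Definition next X := X + ulp X.

Lemma ulp_exp_mono : {homo ulp_exp : t t' / t <= t'}.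
Proof. by move=> t t' le_tt'; rewrite leq_sub2r // leq_trunc_log. Qed.

Lemma ulp_exp_max j t : 2 ^ (m + j) <= t -> j <= ulp_exp t.
Proof. by move=> /(trunc_log_max (isT : 1 < 2)); rewrite /ulp_exp; lia. Qed.

Lemma ulp_exp_small t : t < 2 ^ m -> ulp_exp t = 0.
Proof.
move=> lt_tm; apply/eqP; rewrite subn_eq0.
have [->|t_gt0] := posnP t; first by rewrite trunc_log0.
by rewrite -(leq_exp2l _ _ (isT : 1 < 2)) ltnW // (leq_ltn_trans (trunc_logP _ t_gt0)).
Qed.

Lemma ulp_expP t : 2 ^ m <= t -> 2 ^ (m + ulp_exp t) <= t.
Proof.
move=> le_mt; have /subnKC-> := trunc_log_max (isT : 1 < 2) le_mt.
by rewrite trunc_logP // (leq_trans _ le_mt) ?expn_gt0.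
Qed.

Lemma ulp_exp_ltn t : t < 2 ^ (m + ulp_exp t).+1.
Proof.
by apply: leq_trans (trunc_log_ltn t (isT : 1 < 2)) _; rewrite leq_exp2l /ulp_exp //; lia.
Qed.

Lemma ulp_exp_leq j t : t < 2 ^ (m + j).+1 -> ulp_exp t <= j.
Proof.
move=> lt_t; have [le_mt|/ulp_exp_small-> //] := leqP (2 ^ m) t.
have := leq_ltn_trans (ulp_expP le_mt) lt_t.
by rewrite ltn_exp2l // ltnS leq_add2l.
Qed.

Lemma ulp_exp_eq j t : 2 ^ (m + j) <= t < 2 ^ (m + j).+1 -> ulp_exp t = j.
Proof. by case/andP=> /ulp_exp_max ge_j /ulp_exp_leq le_j; apply/eqP; rewrite eqn_leq le_j. Qed.

Lemma ulp_exp_expn j : ulp_exp (2 ^ (m + j)) = j.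
Proof. by rewrite /ulp_exp trunc_expnK // addKn. Qed.

Lemma ulp_leq_gap A Y t : on_grid A -> on_grid Y -> A <= t < Y -> ulp t <= Y - A.
Proof.
move=> /andP[_ dA] /andP[_ dY] /andP[le_At lt_tY].
have [le_mt|lt_tm] := leqP (2 ^ m) t; last first.
  by rewrite /ulp ulp_exp_small //; lia.
have dvd_ulp X : ulp_exp t <= ulp_exp X -> ulp t %| ulp X.
  by move=> ?; rewrite dvdn_Pexp2l.
have dY' : ulp t %| Y.
  by apply: dvdn_trans dY; apply: dvd_ulp; apply: ulp_exp_mono; lia.
have [B [le_AB le_Bt dB]] : exists B, [/\ A <= B, B <= t & ulp t %| B].
  have [le_A|lt_A] := leqP (2 ^ (m + ulp_exp t)) A.
    by exists A; split=> //; apply: dvdn_trans dA; apply/dvd_ulp/ulp_exp_max.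
  exists (2 ^ (m + ulp_exp t)); split; [exact: ltnW|exact: ulp_expP|].
  by rewrite /ulp dvdn_Pexp2l // leq_addl.
have := dvdn_gap dB dY' (leq_ltn_trans le_Bt lt_tY); lia.
Qed.

Lemma next_leq_expn A : ulp A %| A -> next A <= 2 ^ (m + ulp_exp A).+1.
Proof.
move=> dA; apply: dvdn_gap dA _ (ulp_exp_ltn A).
by rewrite /ulp dvdn_Pexp2l //; lia.
Qed.

Lemma ulp_exp_next A t : ulp A %| A -> A <= t < next A -> ulp_exp t = ulp_exp A.
Proof.
move=> dA /andP[le_At lt_t]; apply/eqP; rewrite eqn_leq (ulp_exp_mono le_At) andbT.
exact/ulp_exp_leq/(leq_trans lt_t)/next_leq_expn.
Qed.

Lemma on_grid_next A : on_grid A -> A < top -> on_grid (next A).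
Proof.
move=> /andP[le_A dA] lt_A.
have le_c : ulp_exp A <= c by rewrite -(ulp_exp_expn c); apply: ulp_exp_mono.
apply/andP; split.
  by apply: dvdn_gap dA _ lt_A; rewrite /ulp /top dvdn_Pexp2l //; lia.
have [lt_next|ge_next] := ltnP (next A) (2 ^ (m + ulp_exp A).+1).
  have /ulp_exp_mono ge_A : A <= next A by apply: leq_addr.
  rewrite /ulp; have -> : ulp_exp (next A) = ulp_exp A by apply/eqP; rewrite eqn_leq ge_A ulp_exp_leq.
  exact: dvdn_add.
have -> : next A = 2 ^ (m + (ulp_exp A).+1).
  by apply/eqP; rewrite eqn_leq addnS next_leq_expn.
by rewrite /ulp ulp_exp_expn dvdn_Pexp2l // leq_addl.
Qed.

Lemma sum_ulp_exp j :
  \sum_(0 <= t < 2 ^ (m + j)) ulp_exp t + 2 ^ (m + j).+1 = 2 ^ m * (j * 2 ^ j + 2).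
Proof.
elim: j => [|j IH].
  rewrite big_nat_cond big1 => [|t /andP[/andP[_ lt_t] _]]; last first.
    by rewrite ulp_exp_small // -(addn0 m).
  by rewrite add0n addn0 expnS mulnC.
rewrite (@big_cat_nat _ _ _ (2 ^ (m + j))) ?leq_exp2l ?leq_add2l //=.
rewrite [X in _ + X + _](@eq_big_nat _ _ _ _ _ _ (fun=> j)) => [|t t_in]; last first.
  by apply: ulp_exp_eq; rewrite -addnS.
set S := \sum_(0 <= t < 2 ^ (m + j)) ulp_exp t in IH *; clearbody S.
rewrite sum_nat_const_nat (addnS m j) !expnS expnD in IH *.
rewrite [X in (X - _)]mul2n -addnn addnK; nia.
Qed.

Lemma on_grid0 : on_grid 0.
Proof. by rewrite /on_grid leq0n dvdn0. Qed.

Lemma ltn_next X : X < next X.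
Proof. by rewrite /next -addn1 leq_add2l expn_gt0. Qed.

Lemma walk_to_top A : on_grid A ->
  exists n, iter n next A = top /\ all on_grid (traject next A n.+1).
Proof.
have [k] := ubnP (top - A); elim: k A => // k IH A lt_k gA.
have [lt_A|ge_A] := ltnP A top; last first.
  exists 0%N; rewrite /= gA; split=> //.
  by apply/eqP; rewrite eqn_leq ge_A andbT; case/andP: gA.
have [|n [iter_n walk_n]] := IH (next A) _ (on_grid_next gA lt_A).
  by have := ltn_next A; lia.
by exists n.+1; rewrite iterSr trajectS /= gA.
Qed.

Lemma uniq_traject_next A n : uniq (traject next A n).
Proof.
apply: (sorted_uniq ltn_trans ltnn); case: n => //= n.
by apply: sub_path (fpath_traject next A n) => x y /eqP <-; apply: ltn_next.
Qed.

End Grid.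

Local Open Scope ring_scope.

Lemma sum_nseq0_cat (V : nmodType) (W : nmodType) (F : V -> W) k s :
  F 0 = 0 -> \sum_(y <- nseq k 0 ++ s) F y = \sum_(y <- s) F y.
Proof.
move=> F0; rewrite big_cat /= big1_seq ?add0r // => y /andP[_].
by rewrite mem_nseq => /andP[_ /eqP->].
Qed.

Lemma map_nth_index (T : eqType) (U : Type) (u0 : U) (w : seq T) (L : seq U) :
  uniq w -> size L = size w -> [seq nth u0 L (index x w) | x <- w] = L.
Proof.
move=> uniq_w size_L; apply: (@eq_from_nth _ u0); rewrite size_map ?size_L // => i lt_i.
have x0 : T by case: (w) lt_i => [|x].
by rewrite (nth_map x0) // index_uniq.
Qed.

Section SortedPrefix.
Variables (T : eqType) (le : rel T) (V : nmodType).
Hypotheses (le_refl : reflexive le) (le_trans : transitive le).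
Hypothesis le_anti : antisymmetric le.

Lemma sum_le_nth_sorted (w : seq T) (p : T -> V) x0 i :
  uniq w -> sorted le w -> (i < size w)%N ->
  \sum_(y <- w | le y (nth x0 w i)) p y = \sum_(y <- take i.+1 (map p w)) y.
Proof.
elim: w i => [//|z w IH] i /= /andP[z_notin uniq_w] sorted_zw lt_i.
have /allP z_le := order_path_min le_trans sorted_zw.
rewrite !big_cons; case: i lt_i => [|i] lt_i /=.
  rewrite take0 big_nil le_refl big1_seq // => y /andP[y_le y_in].
  have y_eq : y = z by apply: le_anti; rewrite y_le z_le.
  by move: z_notin; rewrite -y_eq y_in.
by rewrite z_le ?mem_nth // IH // (path_sorted sorted_zw).
Qed.

End SortedPrefix.

Section PartialSums.
Variables (V : nmodType) (S : V -> Prop).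

Definition partial_sums_in (a : V) (s : seq V) :=
  forall i, (i < size s)%N -> S (a + \sum_(y <- take i.+1 s) y).


Lemma partial_sums_in_cons a y s :
  partial_sums_in a (y :: s) <-> S (a + y) /\ partial_sums_in (a + y) s.
Proof.
split=> [sums_ys|[S_ay sums_s] [|i] lt_i].
- split; first by have := sums_ys 0%N isT; rewrite /= take0 big_seq1.
  by move=> i lt_i; have := sums_ys i.+1 lt_i; rewrite /= big_cons addrA.
- by rewrite /= take0 big_seq1.
- by rewrite /= big_cons addrA; apply: sums_s.
Qed.

Lemma partial_sums_in_nseq0 a k s :
  S a -> partial_sums_in a s -> partial_sums_in a (nseq k 0 ++ s).
Proof.
move=> S_a sums_s; elim: k => //= k IH.
by apply/partial_sums_in_cons; rewrite addr0.
Qed.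

End PartialSums.

Section Log2.
Variable R : realType.
Implicit Types x y : R.

Lemma ln2_gt0 : 0 < ln (2 : R).
Proof. by rewrite ln_gt0 // ltr1n. Qed.

Lemma log2M x y : 0 < x -> 0 < y -> log2 (x * y) = log2 x + log2 y.
Proof. by move=> x_gt0 y_gt0; rewrite /log2 lnM ?posrE // mulrDl. Qed.

Lemma log2V x : 0 < x -> log2 x^-1 = - log2 x.
Proof. by move=> x_gt0; rewrite /log2 lnV ?posrE // mulNr. Qed.

Lemma log2_pow2 k : log2 (2 ^ k)%:R = k%:R :> R.
Proof.
by rewrite /log2 natrX lnXn // mulrnAl mulfV ?gt_eqF ?ln2_gt0.
Qed.

Lemma ler_log2 x y : 0 < x -> x <= y -> log2 x <= log2 y.
Proof.
move=> x_gt0 le_xy; rewrite ler_pM2r ?invr_gt0 ?ln2_gt0 //.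
by rewrite ler_ln ?posrE // (lt_le_trans x_gt0).
Qed.

Definition xlog2x y := if y == 0 then 0 else y * log2 y.

End Log2.

Section GridReal.
Variables (R : realType) (m c : nat).
Local Notation top := (top m c).
Local Notation on_grid := (on_grid m c).
Local Notation ulp_exp := (ulp_exp m).
Local Notation ulp := (ulp m).
Local Notation next := (next m).

Definition scale (X : nat) : R := X%:R / top%:R.

Definition budget (X : nat) : R :=
  \sum_(0 <= t < X) ((m + c)%:R - (ulp_exp t)%:R) / top%:R.

Definition grid_val (x : R) := exists2 X, on_grid X & x = scale X.

Lemma top_gt0 : (0 < top)%N. Proof. exact: expn_gt0. Qed.

Lemma scale_inj : injective scale.
Proof.
move=> X Y /(mulIf _) /eqP; rewrite invr_eq0 pnatr_eq0 -lt0n top_gt0 eqr_nat.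
by move=> /(_ isT) /eqP.
Qed.

Lemma ler_scale X Y : (scale X <= scale Y) = (X <= Y)%N.
Proof. by rewrite ler_pM2r ?invr_gt0 ?ltr0n ?top_gt0 // ler_nat. Qed.

Lemma scaleD X Y : scale (X + Y) = scale X + scale Y.
Proof. by rewrite /scale natrD mulrDl. Qed.

Lemma scale0 : scale 0 = 0. Proof. by rewrite /scale mul0r. Qed.

Lemma scale_top : scale top = 1.
Proof. by rewrite /scale divff // pnatr_eq0 -lt0n top_gt0. Qed.

Lemma budget0 : budget 0 = 0. Proof. by rewrite /budget big_geq. Qed.

Lemma budget_sub A Y : (A <= Y)%N ->
  budget Y - budget A = \sum_(A <= t < Y) ((m + c)%:R - (ulp_exp t)%:R) / top%:R.
Proof. by move=> le_AY; rewrite /budget (@big_cat_nat _ _ _ A) //= addrAC subrr add0r. Qed.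

Lemma neg_xlog2x_scale A D : (0 < D)%N ->
  - xlog2x (scale D) = \sum_(A <= t < A + D) ((m + c)%:R - log2 D%:R) / top%:R.
Proof.
move=> D_gt0; have topR_gt0 : 0 < top%:R :> R by rewrite ltr0n top_gt0.
rewrite sumr_const_nat addKn /xlog2x /scale mulf_eq0 invr_eq0 !pnatr_eq0.
rewrite !eqn0Ngt D_gt0 top_gt0 /= log2M ?ltr0n ?invr_gt0 // log2V // log2_pow2.
by rewrite -mulr_natl; field; rewrite gt_eqF.
Qed.

Lemma neg_xlog2x_le_budget A Y : on_grid A -> on_grid Y -> (A <= Y)%N ->
  - xlog2x (scale (Y - A)) <= budget Y - budget A.
Proof.
move=> gA gY le_AY; have [<-|lt_AY] := eqVneq A Y.
  by rewrite subnn scale0 /xlog2x eqxx oppr0 subrr.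
rewrite budget_sub // (neg_xlog2x_scale A) ?subn_gt0 ?ltn_neqAle ?lt_AY //.
rewrite subnKC //; apply: ler_sum_nat => t t_in.
rewrite ler_pM2r ?invr_gt0 ?ltr0n ?top_gt0 // lerD2l lerN2 -(@log2_pow2 R (ulp_exp t)).
apply: ler_log2; rewrite ?ltr0n ?expn_gt0 // ler_nat; exact: ulp_leq_gap gA gY t_in.
Qed.

Lemma neg_xlog2x_ulp A : (ulp A %| A)%N ->
  - xlog2x (scale (ulp A)) = budget (next A) - budget A.
Proof.
move=> dA; rewrite budget_sub ?leq_addr // (neg_xlog2x_scale A) ?expn_gt0 //.
by apply: eq_big_nat => t t_in; rewrite /ulp log2_pow2 (ulp_exp_next dA).
Qed.

Lemma budget_top : budget top = m%:R + 2 - 2 / 2 ^+ c.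
Proof.
rewrite /budget -big_distrl /= sumrB sumr_const_nat subn0 -natr_sum.
have /eqP := sum_ulp_exp m c; rewrite -(eqr_nat R) natrD => /eqP sum_eq.
rewrite -[(\sum_(0 <= t < _) _)%:R](addrK (2 ^ (m + c).+1)%:R) sum_eq.
rewrite /top -[_ *+ 2 ^ (m + c)]mulr_natr !(natrM, natrD, natrX, exprS, exprD).
have pm_neq0 : 2 ^+ m != 0 :> R by rewrite expf_neq0 ?pnatr_eq0.
have pc_neq0 : 2 ^+ c != 0 :> R by rewrite expf_neq0 ?pnatr_eq0.
by field; rewrite pm_neq0 pc_neq0.
Qed.

Lemma entropy_le_budget L A Z : on_grid A -> all (fun y => 0 <= y) L ->
  partial_sums_in grid_val (scale A) L -> scale A + \sum_(y <- L) y = scale Z ->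
  - \sum_(y <- L) xlog2x y <= budget Z - budget A.
Proof.
elim: L A => [|y L IH] A gA /=.
  by move=> _ _; rewrite !big_nil addr0 => /scale_inj ->; rewrite oppr0 subrr.
move=> /andP[y_ge0 L_ge0] /partial_sums_in_cons[[Y gY eY]]; rewrite eY => sums_L.
rewrite big_cons addrA eY => sum_L.
have le_AY : (A <= Y)%N by rewrite -ler_scale -eY lerDl.
have y_eq : y = scale (Y - A) by apply: (addrI (scale A)); rewrite -scaleD subnKC.
have := lerD (neg_xlog2x_le_budget gA gY le_AY) (IH Y gY L_ge0 sums_L sum_L).
by rewrite big_cons opprD y_eq; lra.
Qed.

Lemma walk_entropy n A : all on_grid (traject next A n.+1) ->
  let L := [seq scale (ulp a) | a <- traject next A n] in
  [/\ partial_sums_in grid_val (scale A) L,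
      scale A + \sum_(y <- L) y = scale (iter n next A) &
      - \sum_(y <- L) xlog2x y = budget (iter n next A) - budget A].
Proof.
elim: n A => [|n IH] A.
  by move=> _ /=; rewrite !big_nil addr0 oppr0 subrr.
rewrite trajectS => /andP[gA walk_grid] /=.
have [sums_L sum_L ent_L] := IH _ walk_grid.
have scale_next : scale A + scale (ulp A) = scale (next A) by rewrite -scaleD.
rewrite !big_cons addrA scale_next -iterS iterSr; split=> //.
- apply/partial_sums_in_cons; rewrite scale_next; split=> //.
  by exists (next A) => //; case/andP: walk_grid.
- by rewrite opprD ent_L neg_xlog2x_ulp; [lra | case/andP: gA].
Qed.

End GridReal.

Section Floats.
Variables (R : realType) (E m : nat).
Hypothesis E_ge2 : (2 <= E)%N.
Local Notation c := (2 ^ E.-1 - 2)%N.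
Local Notation scale := (scale R m c).
Local Notation on_grid := (on_grid m c).

Lemma pow2_predE : (2 ^ E.-1 = c + 2)%N.
Proof.
have : (2 <= 2 ^ E.-1)%N by rewrite -{1}(expn1 2) leq_exp2l //; case: E E_ge2 => [|[|]].
lia.
Qed.

Lemma exprz_scale j : (2 : R) ^ (j%:Z - (m + c)%:Z) = scale (2 ^ j).
Proof. by rewrite expfzDr ?pnatr_eq0 // -exprnN /scale !natrX. Qed.

Lemma fval_subnormal k : fval R E m false 0 k = scale k.
Proof.
rewrite /fval mul1r /= (_ : _ - _ - _ = 0%:Z - (m + c)%:Z)%R ?exprz_scale.
  by rewrite /scale mulrA mulr1.
by have := pow2_predE; rewrite /fbias; lia.
Qed.

Lemma fval_normal e k : fval R E m false e.+1 k = scale ((2 ^ m + k) * 2 ^ e).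
Proof.
rewrite /fval mul1r /= (_ : _ - _ - _ = e%:Z - (m + c)%:Z)%R ?exprz_scale.
  by rewrite /scale natrM mulrA.
by have := pow2_predE; rewrite /fbias; lia.
Qed.

Lemma exprz_target : (2 : R) ^ (3 - (2 ^ E.-1)%:Z) = 2 / 2 ^+ c.
Proof.
rewrite (_ : 3 - _ = 1 + - c%:Z)%R; last by have := pow2_predE; lia.
by rewrite expfzDr ?pnatr_eq0 // expr1z exprnN.
Qed.

Lemma mem_float_vals x : x \in float_vals R E m ->
  exists s e k, [/\ (e < 2 ^ E - 1)%N, (k < 2 ^ m)%N & x = fval R E m s e k].
Proof.
by rewrite /float_vals mem_undup => /mapP[[[s e] k] _ ->]; exists s, e, k.
Qed.

Lemma fval_in_float_vals s e k : (e < 2 ^ E - 1)%N -> (k < 2 ^ m)%N ->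
  fval R E m s e k \in float_vals R E m.
Proof.
move=> lt_e lt_k; rewrite /float_vals mem_undup.
by apply/mapP; exists ((s, Ordinal lt_e), Ordinal lt_k); rewrite ?mem_enum.
Qed.

Lemma float01_grid_val x :
  x \in float_vals R E m -> 0 <= x <= 1 -> grid_val m c x.
Proof.
move=> /mem_float_vals[s [e [k [_ lt_k ->]]]] /andP[x_ge0 x_le1].
have fval_ge0 e' : 0 <= fval R E m false e' k.
  by case: e' => [|e']; rewrite ?fval_subnormal ?fval_normal /scale divr_ge0.
case: s x_ge0 x_le1 => x_ge0 x_le1.
  have fval_neg : fval R E m true e k = - fval R E m false e k.
    by rewrite /fval expr1 mulN1r mul1r.
  exists 0%N; first exact: on_grid0.
  move: x_ge0; rewrite fval_neg scale0 oppr_ge0 => x_le0.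
  by apply/eqP; rewrite oppr_eq0 eq_le x_le0 fval_ge0.
case: e x_ge0 x_le1 => [|e] _ x_le1.
  rewrite fval_subnormal; exists k => //; rewrite /on_grid /ulp ulp_exp_small //.
  by rewrite dvd1n andbT (leq_trans (ltnW lt_k)) // leq_exp2l // leq_addr.
rewrite fval_normal in x_le1 *; exists ((2 ^ m + k) * 2 ^ e)%N => //.
rewrite /on_grid -(@ler_scale R m c) scale_top x_le1 /ulp (@ulp_exp_eq _ e).
  exact: dvdn_mull.
have e_gt0 : (0 < 2 ^ e)%N by rewrite expn_gt0.
by rewrite expnS !expnD; apply/andP; split; nia.
Qed.

Lemma grid_float X : on_grid X -> scale X \in float_vals R E m.
Proof.
move=> /andP[le_X dX].
have pow2E : (2 ^ E = 2 * (c + 2))%N by rewrite -pow2_predE -expnS prednK ?(ltnW E_ge2).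
have [lt_X|le_mX] := ltnP X (2 ^ m).
  by rewrite -fval_subnormal; apply: fval_in_float_vals => //; lia.
have le_c : (ulp_exp m X <= c)%N by rewrite -(ulp_exp_expn m c); apply: ulp_exp_mono.
move: dX (ulp_expP le_mX) (ulp_exp_ltn m X) le_c; rewrite /ulp.
set j := ulp_exp m X => /dvdnP[Y ->].
rewrite -addSn !expnD ltn_pmul2r ?leq_pmul2r ?expn_gt0 // expnS => le_Y lt_Y le_c.
by rewrite -(subnKC le_Y) -fval_normal; apply: fval_in_float_vals; lia.
Qed.

Lemma grid_card s : uniq s -> all on_grid s -> (size s <= card_F01 R E m)%N.
Proof.
move=> uniq_s /allP grid_s; rewrite -(size_map scale).
apply: uniq_leq_size; first by rewrite (map_inj_uniq (@scale_inj R m c)).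
move=> _ /mapP[X /grid_s gX ->]; rewrite mem_filter grid_float //.
rewrite -(scale0 R m c) -(scale_top R m c) !(@ler_scale R m c) leq0n andbT.
by case/andP: gX.
Qed.

End Floats.

Section RbOrder.
Variable R : realType.

Lemma Rb_le_refl : reflexive (@Rb_le R).
Proof. by case=> //= r; exact: lexx. Qed.

Lemma Rb_le_total : total (@Rb_le R).
Proof. by case=> [|r||] [|s||] //=; exact: le_total. Qed.

Lemma Rb_le_trans : transitive (@Rb_le R).
Proof. by case=> [|r||] [|s||] [|t||] //=; exact: le_trans. Qed.

Lemma Rb_le_anti : antisymmetric (@Rb_le R).
Proof.
by case=> [|r||] [|s||] //= /andP[rs sr]; congr RbFin; apply/eqP; rewrite eq_le rs.
Qed.

End RbOrder.

Section Values.
Variables (R : realType) (n : nat) (gamma : bits n -> Rb R) (E m : nat).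
Hypothesis E_ge2 : (2 <= E)%N.
Local Notation c := (2 ^ E.-1 - 2)%N.
Local Notation w := (sort (@Rb_le R) (fmt_vals gamma)).
Local Notation max_entropy := (budget R m c (top m c)).

Lemma perm_sorted_vals : perm_eq w (fmt_vals gamma).
Proof. by rewrite perm_sort. Qed.

Lemma uniq_sorted_vals : uniq w.
Proof. by rewrite (perm_uniq perm_sorted_vals) undup_uniq. Qed.

Lemma sum_sorted_vals (F : Rb R -> R) :
  \sum_(x <- fmt_vals gamma) F x = \sum_(y <- map F w) y.
Proof. by rewrite big_map (perm_big _ perm_sorted_vals). Qed.

Lemma entropy_sorted_vals p : entropy gamma p = - \sum_(y <- map p w) xlog2x y.
Proof. by rewrite /entropy big_map (perm_big _ perm_sorted_vals). Qed.

Lemma cdf_sorted_vals p i : (i < size w)%N ->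
  cdf gamma p (nth (RbBot R) w i) = \sum_(y <- take i.+1 (map p w)) y.
Proof.
move=> lt_i; rewrite /cdf -(perm_big _ perm_sorted_vals).
by rewrite sum_le_nth_sorted ?uniq_sorted_vals ?sort_sorted //;
  [exact: Rb_le_refl | exact: Rb_le_trans | exact: Rb_le_anti | exact: Rb_le_total].
Qed.

Lemma Fdist_masses p : is_Fdist gamma E m p ->
  [/\ all (fun y => 0 <= y) (map p w), partial_sums_in (grid_val m c) 0 (map p w)
    & \sum_(y <- map p w) y = 1].
Proof.
move=> [p_ge0 [_ [sum_p cdf_float]]]; rewrite -sum_sorted_vals.
split=> [|i|//]; first by apply/allP => _ /mapP[x _ ->].
rewrite size_map => lt_i; rewrite add0r -cdf_sorted_vals //.
set x := nth _ w i.
apply: (float01_grid_val E_ge2).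
  by apply: cdf_float; rewrite -(perm_mem perm_sorted_vals) mem_nth.
rewrite sumr_ge0 //= -sum_p /cdf [X in _ <= X](bigID (fun y => Rb_le y x)) /=.
by rewrite lerDl sumr_ge0.
Qed.

Lemma Fdist_of_masses (L : seq R) : size L = size w -> all (fun y => 0 <= y) L ->
  partial_sums_in (grid_val m c) 0 L -> \sum_(y <- L) y = 1 ->
  is_Fdist gamma E m (fun x => nth 0 L (index x w)).
Proof.
move=> size_L L_ge0 sums_L sum_L.
have map_p := map_nth_index 0 uniq_sorted_vals size_L.
split; [|split; [|split]].
- move=> x; have [lt_x|ge_x] := ltnP (index x w) (size L); last by rewrite nth_default.
  by apply: (allP L_ge0); rewrite mem_nth.
- move=> x x_notin; rewrite nth_default // size_L memNindex //.
  by rewrite (perm_mem perm_sorted_vals).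
- by rewrite sum_sorted_vals map_p.
move=> x x_in; have x_w : x \in w by rewrite (perm_mem perm_sorted_vals).
rewrite -(nth_index (RbBot R) x_w) cdf_sorted_vals ?index_mem // map_p.
have [|X gX] := sums_L (index x w); first by rewrite size_L index_mem.
by rewrite add0r => ->; apply: grid_float.
Qed.

Lemma entropy_le_max p : is_Fdist gamma E m p -> entropy gamma p <= max_entropy.
Proof.
move=> /Fdist_masses[p_ge0 sums_p sum_p].
have := @entropy_le_budget R m c _ 0 (top m c) (on_grid0 m c) p_ge0.
rewrite scale0 add0r scale_top budget0 subr0 => /(_ sums_p sum_p).
by rewrite entropy_sorted_vals.
Qed.

(* The masses are the ulps along the walk 0, next 0, ..., top, padded with
   zeros in front so that they fill all of [w]. *)
Lemma max_entropy_attained : (card_F01 R E m <= (size (fmt_vals gamma)).+1)%N ->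
  exists2 p, is_Fdist gamma E m p & entropy gamma p = max_entropy.
Proof.
move=> card_le; have [k [iter_top walk_grid]] := walk_to_top (on_grid0 m c).
have [] := walk_entropy R walk_grid; set M := map _ _.
rewrite iter_top scale_top scale0 add0r budget0 subr0 => sums_M sum_M ent_M.
have le_k : (k <= size w)%N.
  have := grid_card R E_ge2 (uniq_traject_next m 0 k.+1) walk_grid.
  by rewrite size_traject size_sort => /leq_trans/(_ card_le).
set L := nseq (size w - k) 0 ++ M.
have size_L : size L = size w by rewrite size_cat size_nseq size_map size_traject subnK.
exists (fun x => nth 0 L (index x w)).
  apply: Fdist_of_masses => //.
  - rewrite all_cat all_nseq lexx orbT; apply/allP => _ /mapP[a _ ->].
    by rewrite /scale divr_ge0.
  - by apply: partial_sums_in_nseq0 => //; exists 0%N; rewrite ?scale0 // on_grid0.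
  - by rewrite sum_nseq0_cat.
rewrite entropy_sorted_vals map_nth_index ?uniq_sorted_vals //.
by rewrite sum_nseq0_cat ?ent_M // /xlog2x eqxx.
Qed.

End Values.

Unset Implicit Arguments. Set Strict Implicit.

Theorem propositionD3 (R : realType) (n : nat)
  (gamma : bits n -> Rb R) (phi : bits n -> bits n) (E m : nat) :
  is_binfmt gamma phi ->
  (2 <= E)%N ->
  (card_F01 R E m <= (size (fmt_vals gamma)).+1)%N ->
  let target : R := m%:R + 2 - 2 ^ (3 - (2 ^ E.-1)%:Z) in
  (exists p : Rb R -> R, is_Fdist gamma E m p /\ entropy gamma p = target) /\
  (forall p : Rb R -> R, is_Fdist gamma E m p -> entropy gamma p <= target).
Proof.
(* Only the value set of the format matters, not its encoding. *)
move=> _ E_ge2 card_le target.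
have -> : target = budget R m (2 ^ E.-1 - 2) (top m (2 ^ E.-1 - 2)).
  by rewrite /target budget_top (exprz_target _ E_ge2).
split; last exact: entropy_le_max.
by have [p Fdist_p ent_p] := max_entropy_attained E_ge2 card_le; exists p.
Qed.
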